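(* Let $k$ be a positive integer, $a=6k+5$, $b=2a-6$, $c=2a-4$, $S=\{a,b,c\}$, $G=\langle S\rangle$. For $i\in[0,4k+2]$ let $I_{i,k}=[ia-6\lfloor i/2\rfloor,\,ia-4]_2\cup\{ia\}$, and let $H_{14,k}=\bigcup_{i=0}^{4k+2}I_{i,k}\cup[(4k+1)a+3,\infty[$. Then: (1) $x\in G$ if and only if $x=(s+2q)a-6q+2r$ for some $q,r,s\in\mathbb{N}$ with $0\le r\le q$; (2) $I_{i,k}<I_{i+2,k}$ for $i\in[0,4k]$; $I_{i,k}<I_{i+1,k}$ for $i\in[0,2k]$; and for every $i\in[2k+1,4k+1]$, $I_{i+1,k}\cap[(i-1)a+1,\,ia]=[ia-6i_k-1,\,ia-1]_2$, where $i_k=\lfloor (i-1-2k)/2\rfloor$; (3) $G=H_{14,k}$; (4) $H_{14,k}$ is a $3$-permutation numerical semigroup.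
   Context: $\mathbb{N}=\{0,1,2,\dots\}$. A numerical semigroup is a submonoid $G$ of $(\mathbb{N},+,0)$ with $\mathbb{N}\setminus G$ finite; $\langle S\rangle$ is the submonoid generated by $S$. Writing the elements of a numerical semigroup as $0=g_0<g_1<g_2<\cdots$, it is an $n$-permutation numerical semigroup if it is generated by $\{g_1,\dots,g_n\}$ and for every $k\in\mathbb{N}$ the tuple $(g_{kn+1}\bmod n,\dots,g_{kn+n}\bmod n)$ contains exactly one representative of each residue class mod $n$. Notation: $[u,v]=\{x\in\mathbb{N}:u\le x\le v\}$ and $[u,v]_2=\{x\in[u,v]:x\equiv u\pmod 2\}$ (both empty if $u>v$); $[u,\infty[=\{x\in\mathbb{N}:x\ge u\}$; for nonempty $X,Y$, $X<Y$ means $x<y$ for all $x\in X,y\in Y$. *)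

From mathcomp Require Import all_boot.
Set Implicit Arguments. Unset Strict Implicit. Unset Printing Implicit Defensive.

Inductive gen (S : nat -> Prop) : nat -> Prop :=
| gen0 : gen S 0
| genS x y : S x -> gen S y -> gen S (x + y).

Definition numerical_semigroup (G : nat -> Prop) : Prop :=
  G 0 /\ (forall x y, G x -> G y -> G (x + y)) /\
  (exists N, forall x, N <= x -> G x).

Definition enumerates (G : nat -> Prop) (g : nat -> nat) : Prop :=
  (forall j, g j < g j.+1) /\ (forall x, G x <-> exists j, g j = x).

Definition perm_numerical_semigroup (n : nat) (G : nat -> Prop) : Prop :=
  numerical_semigroup G /\
  exists g : nat -> nat,
    enumerates G g /\
    (forall x, G x <-> gen (fun y => exists2 j, 1 <= j <= n & y = g j) x) /\
    (forall m r, r < n ->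
       exists j, [/\ 1 <= j <= n, g (m * n + j) %% n = r &
                   forall j', 1 <= j' <= n -> g (m * n + j') %% n = r -> j' = j]).

Definition la (k : nat) : nat := 6 * k + 5.
Definition lb (k : nat) : nat := 2 * la k - 6.
Definition lc (k : nat) : nat := 2 * la k - 4.
Definition Sk (k : nat) (x : nat) : Prop := x = la k \/ x = lb k \/ x = lc k.
Definition Gk (k : nat) : nat -> Prop := gen (Sk k).

(* [u,v]_2 = {x | u <= x <= v, x = u mod 2}; v given via x + d <= w to avoid
   truncated subtraction where w - d could be negative *)
Definition Iik (k i : nat) (x : nat) : Prop :=
  (i * la k - 6 * (i %/ 2) <= x /\ x + 4 <= i * la k /\
   x %% 2 = (i * la k - 6 * (i %/ 2)) %% 2)
  \/ x = i * la k.

Definition H14 (k : nat) (x : nat) : Prop :=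
  (exists2 i, i <= 4 * k + 2 & Iik k i x) \/ (4 * k + 1) * la k + 3 <= x.

Definition set_lt (X Y : nat -> Prop) : Prop :=
  forall x y, X x -> Y y -> x < y.

From mathcomp Require Import all_boot zify.

(* Below the conductor C = (4k+1)a + 3 write x = ja - u with 0 <= u < a.  G is
   the union of all columns I_n = {na - 2t : t = 0 or 2 <= t <= 3 floor(n/2)},
   and only I_j and I_(j+1) meet ]ja - a, ja]; so membership of x in G is an
   explicit condition on (j, u), and successors in G can be computed inside
   such windows.  Since a = 2 mod 3, x = 2j - u mod 3.  The elements g_(3m+1)
   are ja (j <= 2k), ja - 1 (j > 2k), the members ja - u of G with u = 2 mod 3,
   and C + 3i; from each of them the next three elements of G have distinct
   residues mod 3 and the fourth is again of one of these forms. *)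

Section Generated.

Variable S : nat -> Prop.

Lemma gen_addn x y : gen S x -> gen S y -> gen S (x + y).
Proof.
elim=> [|x0 y0 Sx0 _ IH] gy; first by rewrite add0n.
by rewrite -addnA; apply: genS (IH gy).
Qed.

Lemma gen_muln n g : S g -> gen S (n * g).
Proof.
move=> Sg; elim: n => [|n IH]; first exact: gen0.
by rewrite mulSn; apply: genS.
Qed.

Lemma gen_sub (S' : nat -> Prop) x :
  (forall y, S y -> S' y) -> gen S x -> gen S' x.
Proof. by move=> sSS'; elim=> [|x0 y0 /sSS' S'x0 _]; [apply: gen0|apply: genS]. Qed.

End Generated.

Section Enumeration.

Variable P : pred nat.
Hypothesis P_unbounded : forall y, exists z, (y < z) && P z.

Definition succ_in y := ex_minn (P_unbounded y).

Lemma succ_inP y :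
  [/\ y < succ_in y, P (succ_in y) & forall z, y < z -> P z -> succ_in y <= z].
Proof.
rewrite /succ_in; case: ex_minnP => z /andP[yz Pz] zmin; split=> // z' yz' Pz'.
by apply: zmin; rewrite yz' Pz'.
Qed.

Lemma succ_in_eq y z :
  P z -> y < z -> (forall x, y < x < z -> ~~ P x) -> succ_in y = z.
Proof.
move=> Pz yz gap; have [ys Ps smin] := succ_inP y.
apply/eqP; rewrite eqn_leq smin //= leqNgt; apply/negP => sz.
by have := gap (succ_in y); rewrite ys sz Ps => /(_ isT).
Qed.

Definition enum_in n := iter n succ_in 0.

Lemma enum_in_enumerates : P 0 -> enumerates P enum_in.
Proof.
move=> P0; split=> [j|x]; first by case: (succ_inP (enum_in j)).
split=> [Px|[j <-]]; last by case: j => [|j] //; case: (succ_inP (enum_in j)).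
have ge_id j : j <= enum_in j.
  elim: j => // j IH; case: (succ_inP (enum_in j)) => /= lt _ _; lia.
have reach n : (exists j, enum_in j = x) \/ enum_in n <= x.
  elim: n => [|n [ex|IH]]; [by right|by left|].
  case: (ltngtP (enum_in n) x) => [lt|gt|<-]; [|lia|by left; exists n].
  by right; case: (succ_inP (enum_in n)) => _ _ /(_ x lt Px).
by case: (reach x.+1) => // le; have := ge_id x.+1; lia.
Qed.

End Enumeration.

Arguments succ_in {P}.
Arguments enum_in {P}.
Arguments enum_in_enumerates {P}.

Lemma uniq_residues_cover n (f : nat -> nat) :
  uniq [seq f j %% n | j <- iota 1 n] -> forall r, r < n ->
  exists j, [/\ 1 <= j <= n, f j %% n = r &
    forall j', 1 <= j' <= n -> f j' %% n = r -> j' = j].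
Proof.
move=> uf r ltr.
have sub : {subset [seq f j %% n | j <- iota 1 n] <= iota 0 n}.
  by move=> _ /mapP[j _ ->]; rewrite mem_iota ltn_pmod //; lia.
have size_s : size (iota 0 n) <= size [seq f j %% n | j <- iota 1 n].
  by rewrite size_map !size_iota.
have [_ eq_s] := uniq_min_size uf sub size_s.
have /mapP[j] : r \in [seq f j %% n | j <- iota 1 n] by rewrite eq_s mem_iota.
rewrite mem_iota => jn fj; exists j; split=> [||j' j'n fj']; [lia|by []|].
move: uf; rewrite -[iota 1 n]/(iota (1 + 0) n) iotaDl -map_comp.
move=> /mkseq_uniqP inj; suff : j'.-1 = j.-1 by lia.
apply: inj; rewrite ?inE /=; [lia|lia|].
by rewrite !add1n !prednK ?fj' -?fj //; lia.
Qed.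

Section H14Semigroup.

Variable k : nat.
Hypothesis k_gt0 : 0 < k.

Local Notation a := (la k).
Local Notation conductor := ((4 * k + 1) * la k + 3).

Lemma laE : a = 6 * k + 5. Proof. by []. Qed.

(* [lia] treats [n * a] as an atom; this is the linear information it needs. *)
Lemma mul_la_ge n : 11 * n <= n * a.
Proof. by rewrite mulnC leq_mul2l laE; lia. Qed.

Lemma Gk_param x :
  Gk k x <-> exists q r s, r <= q /\ x = (s + 2 * q) * a - 6 * q + 2 * r.
Proof.
have aE := laE; split.
- elim=> [|x0 y Sx0 _ [q [r [s [rq ->]]]]]; first by exists 0, 0, 0.
  have := mul_la_ge q; have := mul_la_ge s.
  case: Sx0 => [|[|]] -> sa qa; rewrite /lb /lc.
  + by exists q, r, s.+1; lia.
  + by exists q.+1, r, s; lia.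
  + by exists q.+1, r.+1, s; lia.
- move=> [q [r [s [/subnK <- ->]]]]; set d := q - r.
  have -> : (s + 2 * (d + r)) * a - 6 * (d + r) + 2 * r = s * a + (d * lb k + r * lc k).
    have := mul_la_ge d; have := mul_la_ge r; rewrite /lb /lc; lia.
  apply: gen_addn; first by apply: gen_muln; left.
  by apply: gen_addn; apply: gen_muln; right; [left|right].
Qed.

Lemma IikE n x :
  Iik k n x <-> exists t, x + 2 * t = n * a /\ (t = 0 \/ 2 <= t <= 3 * (n %/ 2)).
Proof.
have := mul_la_ge n; rewrite /Iik => ge; split.
- by case=> [[lo [hi par]]|->]; [exists ((n * a - x) %/ 2)|exists 0]; lia.
- by case=> t [xt [t0|tb]]; [right|left]; lia.
Qed.

Lemma Gk_columns x : Gk k x <-> exists n, Iik k n x.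
Proof.
rewrite Gk_param; split.
- move=> [q [r [s [rq ->]]]]; exists (s + 2 * q); apply/IikE.
  have ge := mul_la_ge (s + 2 * q); exists (3 * q - r); split; first lia.
  by case: q rq ge => [|q] rq ge; [left|right]; lia.
- move=> [n /IikE[t [xt [t0|tb]]]]; have := mul_la_ge n.
    by exists 0, 0, n; lia.
  exists ((t + 2) %/ 3), (3 * ((t + 2) %/ 3) - t), (n - 2 * ((t + 2) %/ 3)).
  by rewrite subnK; lia.
Qed.

Definition col_min n := n * a - 6 * (n %/ 2).

Lemma Iik_bounds {n x} : Iik k n x -> col_min n <= x <= n * a.
Proof. by move=> /IikE[t [xt tb]]; rewrite /col_min; lia. Qed.

Lemma col_min_mono {m n} : m <= n -> col_min m <= col_min n.
Proof.
move=> /subnK <-; have := mul_la_ge (n - m).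
by rewrite /col_min mulnDl; lia.
Qed.

Lemma col_min_conductor {n} : 4 * k + 2 < n -> conductor < col_min n.
Proof.
move=> /col_min_mono; apply: leq_trans; rewrite /col_min mulnDl laE; lia.
Qed.

Lemma H14_columns x : H14 k x <-> exists n, Iik k n x.
Proof.
have aE := laE; split; last first.
  move=> [n xn]; case: (leqP n (4 * k + 2)) => [le|gt]; first by left; exists n.
  by right; have := col_min_conductor gt; have := Iik_bounds xn; lia.
case=> [[n _ xn]|ge]; first by exists n.
move: ge; rewrite (divn_eq x a); have : x %% a < a by apply: ltn_pmod; lia.
move: (x %/ a) (x %% a) => q r lt_r ge.
have q_ge : 4 * k + 1 <= q.
  rewrite leqNgt; apply/negP => lt; have := leq_mul lt (leqnn a); lia.
have qa := mul_la_ge q.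
have [r0|[r_odd|r_even]] : r = 0 \/ odd r \/ 0 < r /\ ~~ odd r by lia.
- by exists q; apply/IikE; exists 0; lia.
- case: (eqVneq r (a - 2)) => [ra|ra].
    by exists q.+3; apply/IikE; exists a.+1; lia.
  by exists q.+1; apply/IikE; exists ((a - r) %/ 2); lia.
- exists q.+2; apply/IikE; exists (a - r %/ 2).
  by case: (ltngtP q (4 * k + 1)) ge => [||->]; lia.
Qed.

Lemma Gk_H14 x : Gk k x <-> H14 k x.
Proof. by rewrite Gk_columns H14_columns. Qed.

Lemma set_lt_Iik2 i : i <= 4 * k -> set_lt (Iik k i) (Iik k i.+2).
Proof.
by move=> le x y /Iik_bounds + /Iik_bounds; rewrite /col_min laE; lia.
Qed.

Lemma set_lt_Iik1 i : i <= 2 * k -> set_lt (Iik k i) (Iik k i.+1).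
Proof.
by move=> le x y /Iik_bounds + /Iik_bounds; rewrite /col_min laE; lia.
Qed.

Lemma Iik_next_overlap i : 2 * k + 1 <= i <= 4 * k + 1 -> forall x,
  (Iik k i.+1 x /\ (i - 1) * a + 1 <= x <= i * a) <->
  (i * a - 6 * ((i - 1 - 2 * k) %/ 2) - 1 <= x <= i * a - 1 /\
   x %% 2 = (i * a - 6 * ((i - 1 - 2 * k) %/ 2) - 1) %% 2).
Proof.
move=> le x; have := mul_la_ge i; have aE := laE.
rewrite mulnBl mul1n /Iik; split=> [[[[lo [hi par]]|->] bnd]|h]; [lia|lia|].
by split; [left|]; lia.
Qed.

Definition Iikb n x :=
  [&& col_min n <= x, x + 4 <= n * a & x %% 2 == col_min n %% 2] || (x == n * a).

Definition H14b x := [exists i : 'I_(4 * k + 3), Iikb i x] || (conductor <= x).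

Lemma H14P x : H14 k x <-> H14b x.
Proof.
have IikP n : Iik k n x <-> Iikb n x by rewrite /Iik /Iikb /col_min; lia.
rewrite /H14 /H14b; split.
- case=> [[i le /IikP xi]|ge]; apply/orP; [left|by right].
  have lt : i < 4 * k + 3 by lia.
  by apply/existsP; exists (Ordinal lt).
- case/orP=> [/existsP[i /IikP xi]|ge]; [left; exists i|by right] => //.
  by have := ltn_ord i; lia.
Qed.

Lemma H14b_unbounded y : exists z, (y < z) && H14b z.
Proof. by exists (y.+1 + conductor); rewrite /H14b; apply/andP; split; lia. Qed.

Definition succ := succ_in H14b_unbounded.

(* [ja - u] (with [u < a]) lies in [I_j] iff [u = 0] or [u] is even in
   [[4, 6 floor(j/2)]], and in [I_(j+1)] iff [a + u] is even and at most
   [6 floor((j+1)/2)]. *)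
Definition in_window j u :=
  u = 0 \/ (4 <= u <= 6 * (j %/ 2) /\ ~~ odd u) \/ (a + u <= 6 * (j.+1 %/ 2) /\ odd u).

Lemma H14_window j u x :
  u < a -> x + u = j * a -> x <= conductor -> H14 k x <-> in_window j u.
Proof.
move=> lt_u xu xC; rewrite H14_columns; have aE := laE; split.
- move=> [n /[dup] /Iik_bounds xb /IikE[t [xt tb]]].
  have [lt|[nj|[nj|gt]]] : n < j \/ n = j \/ n = j.+1 \/ j.+1 < n by lia.
  + by have := leq_mul lt (leqnn a); lia.
  + by subst n; rewrite /in_window; lia.
  + by subst n; rewrite /in_window; lia.
  + have := col_min_mono gt; case: (leqP j (4 * k + 1)) => [le|big].
      by rewrite /col_min; lia.
    by have := @col_min_conductor n; lia.
- case=> [u0|[ev|od]]; [exists j|exists j|exists j.+1]; apply/IikE;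
    [exists 0|exists (u %/ 2)|exists ((a + u) %/ 2)]; lia.
Qed.

Lemma succ_window j u u' x z :
  u' < u <= a -> x + u = j * a -> z + u' = j * a -> z <= conductor ->
  in_window j u' -> (forall v, u' < v < u -> ~ in_window j v) -> succ x = z.
Proof.
move=> uu' xu zu' zC wu' gap; apply: succ_in_eq.
- by apply/H14P; rewrite (H14_window _ _ _ _ zu' zC); last lia.
- lia.
- move=> y /andP[xy yz]; apply/negP => /H14P.
  by rewrite (@H14_window j (j * a - y)); [apply: gap|..]; lia.
Qed.

Lemma succ_beyond z : conductor <= z -> succ z = z.+1.
Proof.
by move=> ge; apply: succ_in_eq => [|//|y /andP[zy yz]]; [rewrite /H14b|]; lia.
Qed.

Definition block_start x :=
  (conductor <= x /\ (x - conductor) %% 3 = 0) \/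
  exists j u, [/\ 1 <= j <= 4 * k + 1, u < a, x + u = j * a &
    (u = 0 /\ j <= 2 * k) \/ (u = 1 /\ 2 * k < j) \/ (u %% 3 = 2 /\ in_window j u)].

Definition good_block x :=
  uniq [:: x %% 3; succ x %% 3; succ (succ x) %% 3] /\
  block_start (succ (succ (succ x))).

Ltac solve_window := unfold in_window in *; try (move=> ? ?); lia.
Ltac succ_step j u u' := apply: (@succ_window j u u'); try solve_window.
Ltac block_at j u := right; exists j, u; split; solve_window.

Lemma block_start_succ_low j u y :
  1 <= j <= 4 * k + 1 -> 2 <= u <= 4 -> y + u = j * a ->
  (forall v, 1 < v < u -> ~ in_window j v) -> block_start (succ y).
Proof.
move=> hj hu yu gap; have aE := laE; have ja := mul_la_ge j.
have jaC : j * a <= (4 * k + 1) * a by rewrite leq_mul2r; lia.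
case: (leqP j (2 * k)) => hk.
- have -> : succ y = j * a by succ_step j u 0; move=> v hv; have := gap v; solve_window.
  by block_at j 0.
- have -> : succ y = j * a - 1 by succ_step j u 1.
  by block_at j 1.
Qed.

Lemma good_block_beyond x :
  conductor <= x -> (x - conductor) %% 3 = 0 -> good_block x.
Proof.
move=> ge md; rewrite /good_block !succ_beyond; try lia.
by split; [rewrite /= !inE; lia|left; lia].
Qed.

Lemma good_block_col_end j : 1 <= j <= 2 * k -> good_block (j * a).
Proof.
move=> hj; have aE := laE; have ja := mul_la_ge j.
have jaC : j.+1 * a <= (4 * k + 1) * a by rewrite leq_mul2r; lia.
set h := j.+1 %/ 2.
have e1 : succ (j * a) = j.+1 * a - 6 * h by succ_step j.+1 (la k) (6 * h).
have e2 : succ (j.+1 * a - 6 * h) = j.+1 * a - (6 * h - 2)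
  by succ_step j.+1 (6 * h) (6 * h - 2).
rewrite /good_block e1 e2; split; first by rewrite /= !inE; lia.
case: (leqP 2 h) => hh.
- have -> : succ (j.+1 * a - (6 * h - 2)) = j.+1 * a - (6 * h - 4)
    by succ_step j.+1 (6 * h - 2) (6 * h - 4).
  by block_at j.+1 (6 * h - 4).
- by apply: (@block_start_succ_low j.+1 4); solve_window.
Qed.

Lemma good_block_col_last j y :
  2 * k < j <= 4 * k + 1 -> y + 1 = j * a -> good_block y.
Proof.
move=> hj y1; have aE := laE; have ja := mul_la_ge j.
have jaC : j * a <= (4 * k + 1) * a by rewrite leq_mul2r; lia.
have e1 : succ y = j * a by succ_step j 1 0.
have e2 : succ (j * a) = j * a + 1 by succ_step j.+1 (la k) (la k - 1).
have e3 : succ (j * a + 1) = j * a + 3 by succ_step j.+1 (la k - 1) (la k - 3).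
rewrite /good_block e1 e2 e3; split; first by rewrite /= !inE; lia.
case: (ltngtP j (4 * k + 1)) => [lt|gt|eq]; [by block_at j.+1 (la k - 3)|lia|].
by left; lia.
Qed.

Lemma good_block_even j t y :
  1 <= j <= 4 * k + 1 -> 0 < t -> 6 * t + 2 < a -> y + (6 * t + 2) = j * a ->
  in_window j (6 * t + 2) -> good_block y.
Proof.
move=> hj ht hu yu w; have aE := laE; have ja := mul_la_ge j.
have jaC : j * a <= (4 * k + 1) * a by rewrite leq_mul2r; lia.
rewrite /good_block.
case: (boolP (a + (6 * t + 1) <= 6 * (j.+1 %/ 2))) => odd_run.
- have e1 : succ y = j * a - (6 * t + 1) by succ_step j (6 * t + 2) (6 * t + 1).
  have e2 : succ (j * a - (6 * t + 1)) = j * a - 6 * t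
    by succ_step j (6 * t + 1) (6 * t).
  have e3 : succ (j * a - 6 * t) = j * a - (6 * t - 1)
    by succ_step j (6 * t) (6 * t - 1).
  rewrite e1 e2 e3; split; first by rewrite /= !inE; lia.
  by block_at j (6 * t - 1).
- have e1 : succ y = j * a - 6 * t by succ_step j (6 * t + 2) (6 * t).
  have e2 : succ (j * a - 6 * t) = j * a - (6 * t - 2)
    by succ_step j (6 * t) (6 * t - 2).
  rewrite e1 e2; split; first by rewrite /= !inE; lia.
  case: (leqP 2 t) => ht2.
  + have -> : succ (j * a - (6 * t - 2)) = j * a - (6 * t - 4)
      by succ_step j (6 * t - 2) (6 * t - 4).
    by block_at j (6 * t - 4).
  + by apply: (@block_start_succ_low j 4); solve_window.
Qed.

Lemma good_block_odd j t y :
  1 <= j <= 4 * k + 1 -> y + (6 * t + 5) = j * a ->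
  in_window j (6 * t + 5) -> good_block y.
Proof.
move=> hj yu w; have aE := laE; have ja := mul_la_ge j.
have jaC : j * a <= (4 * k + 1) * a by rewrite leq_mul2r; lia.
have e1 : succ y = j * a - (6 * t + 4) by succ_step j (6 * t + 5) (6 * t + 4).
have e2 : succ (j * a - (6 * t + 4)) = j * a - (6 * t + 3)
  by succ_step j (6 * t + 4) (6 * t + 3).
rewrite /good_block e1 e2; split; first by rewrite /= !inE; lia.
case: (posnP t) => ht.
- by apply: (@block_start_succ_low j 3); solve_window.
- have -> : succ (j * a - (6 * t + 3)) = j * a - (6 * t + 2)
    by succ_step j (6 * t + 3) (6 * t + 2).
  by block_at j (6 * t + 2).
Qed.

Lemma block_start_good {x} : block_start x -> good_block x.
Proof.
case=> [[ge md]|[j [u [hj hu xu [[u0 le]|[[u1 gt]|[md w]]]]]]].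
- exact: good_block_beyond.
- by move: xu; rewrite u0 addn0 => ->; apply: good_block_col_end; lia.
- by apply: (@good_block_col_last j); [lia|rewrite -u1].
- have [t [ut|ut]] : exists t, u = 6 * t + 2 \/ u = 6 * t + 5
    by exists (u %/ 6); lia.
  + by subst u; apply: (@good_block_even j t) => //; solve_window.
  + by subst u; apply: (@good_block_odd j t).
Qed.

Definition enum := enum_in H14b_unbounded.

Lemma H14_0 : H14 k 0.
Proof. by left; exists 0; [|right]. Qed.

Lemma enum_enumerates : enumerates (H14 k) enum.
Proof.
have [inc mem] := enum_in_enumerates H14b_unbounded (iffLR (H14P 0) H14_0).
by split=> // x; rewrite H14P.
Qed.

Lemma enum_123 : [/\ enum 1 = a, enum 2 = lb k & enum 3 = lc k].
Proof.
have aE := laE; have aC : 2 * a <= (4 * k + 1) * a by rewrite leq_mul2r; lia.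
have e1 : succ 0 = a by succ_step 1 (la k) 0.
have e2 : succ a = lb k by rewrite /lb; succ_step 2 (la k) 6.
have e3 : succ (lb k) = lc k by rewrite /lb /lc; succ_step 2 6 4.
by rewrite /enum /enum_in /= -/succ e1 e2 e3.
Qed.

Lemma enum_block_start m : block_start (enum (m * 3 + 1)).
Proof.
elim: m => [|m IH]; first by have [-> _ _] := enum_123; have aE := laE; block_at 1 0.
have [_ next] := block_start_good IH.
rewrite (_ : m.+1 * 3 + 1 = 3 + (m * 3 + 1)); last lia.
by rewrite /enum /enum_in iterD.
Qed.

Lemma H14_numerical_semigroup : numerical_semigroup (H14 k).
Proof.
split; first exact: H14_0.
split; last by exists conductor => x; right.
by move=> x y; rewrite -!Gk_H14; apply: gen_addn.
Qed.

Lemma H14_perm3 : perm_numerical_semigroup 3 (H14 k).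
Proof.
split; first exact: H14_numerical_semigroup.
exists enum; split; first exact: enum_enumerates.
split=> [x|m].
- have [e1 e2 e3] := enum_123; rewrite -Gk_H14; split; apply: gen_sub => y.
    by case=> [|[|]] ->; [exists 1|exists 2|exists 3].
  case=> j hj ->; have : j = 1 \/ j = 2 \/ j = 3 by lia.
  by case=> [|[|]] ->; rewrite /Sk ?e1 ?e2 ?e3; auto.
- apply: uniq_residues_cover.
  have [res _] := block_start_good (enum_block_start m).
  by rewrite /= !addnS addn0 in res *.
Qed.

End H14Semigroup.

Theorem lemma4p14 (k : nat) (hk : 0 < k) :
  (* (1) *)
  (forall x, Gk k x <->
     exists q r s, r <= q /\ x = (s + 2 * q) * la k - 6 * q + 2 * r) /\
  (* (2) *)
  (forall i, i <= 4 * k -> set_lt (Iik k i) (Iik k i.+2)) /\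
  (forall i, i <= 2 * k -> set_lt (Iik k i) (Iik k i.+1)) /\
  (forall i, 2 * k + 1 <= i <= 4 * k + 1 ->
     forall x,
       (Iik k i.+1 x /\ (i - 1) * la k + 1 <= x <= i * la k) <->
       (i * la k - 6 * ((i - 1 - 2 * k) %/ 2) - 1 <= x <= i * la k - 1 /\
        x %% 2 = (i * la k - 6 * ((i - 1 - 2 * k) %/ 2) - 1) %% 2)) /\
  (* (3) *)
  (forall x, Gk k x <-> H14 k x) /\
  (* (4) *)
  perm_numerical_semigroup 3 (H14 k).
Proof.
split; first exact: Gk_param.
split; first exact: set_lt_Iik2.
split; first exact: set_lt_Iik1.
split; first exact: Iik_next_overlap.
split; first exact: Gk_H14.
exact: H14_perm3.
Qed.
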